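(* Let $m>0$ be a real number and let $\omega=\omega(q)$ be a positive integer-valued function of $q$ such that $\omega(q) \ge \frac{q}{m}\cdot\frac{\log\log q}{\log q}$ for all sufficiently large $q$. Then for all sufficiently large $q$ there exists a $q$-solvable undirected graph which contains no clique of size $\omega(q)$ (i.e. is $K_{\omega(q)}$-free) and has at most $q^{2m+1}$ vertices.
   Context: All graphs are finite. A directed graph $D=(V,E)$ has arcs $E \subseteq \{(u,v)\in V^2 : u \neq v\}$; an undirected graph is identified with the directed graph having both arcs $(u,v)$ and $(v,u)$ for each edge. $N^-(v)=\{u:(u,v)\in E\}$. For $q\ge2$ let $[q]=\{0,\dots,q-1\}$. A $D$-function over $[q]$ is a map $f=(f_v)_{v\in V}:[q]^V\to[q]^V$ with each $f_v(x)$ depending only on $(x_u)_{u\in N^-(v)}$. $D$ is $q$-solvable if some $D$-function $f$ over $[q]$ has the property that for every $x\in[q]^V$ there is $v$ with $f_v(x)=x_v$. Logarithms are natural logarithms. *)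

From mathcomp Require Import all_boot.
From Stdlib Require Import Reals.
Set Implicit Arguments. Unset Strict Implicit. Unset Printing Implicit Defensive.

(* A directed graph on vertex set 'I_n is given by its arc relation e;
   e u v means (u,v) is an arc, so N^-(v) = [pred u | e u v]. *)

Definition undirected (n : nat) (e : rel 'I_n) : Prop :=
  (forall u v, e u v = e v u) /\ (forall v, e v v = false).

Definition is_D_function (n q : nat) (e : rel 'I_n)
    (f : 'I_n -> ('I_n -> 'I_q) -> 'I_q) : Prop :=
  forall v (x y : 'I_n -> 'I_q),
    (forall u, e u v -> x u = y u) -> f v x = f v y.

Definition q_solvable (n q : nat) (e : rel 'I_n) : Prop :=
  exists f : 'I_n -> ('I_n -> 'I_q) -> 'I_q,
    is_D_function e f /\
    forall x : 'I_n -> 'I_q, exists v : 'I_n, f v x = x v.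

Definition has_clique (n : nat) (e : rel 'I_n) (k : nat) : Prop :=
  exists S : {set 'I_n}, #|S| = k /\
    forall u v, u \in S -> v \in S -> u != v -> e u v.

Definition clique_free (n : nat) (e : rel 'I_n) (k : nat) : Prop :=
  ~ has_clique e k.

(* For an alphabet size a >= 2 put d = 2a^2 - 1 and
   N = d(d+1) + 1.  The complete bipartite graph K_{d,N} is solvable over an
   alphabet of size a: the right vertices apply "pages", functions of the
   left configuration such that any d+1 configurations are mapped onto the
   whole alphabet by some page (these exist by a counting argument, since
   one page misses a colour on d+1 points with probability <= 1/a^2); if
   every page guesses wrong, the left configuration is one of at most d
   exceptional ones, and the d left vertices bet on them one each.  The join
   of r+1 copies of a graph solvable over an alphabet A is solvable over
   'I_{r+1} x A, hence over 'I_q for q <= (r+1)a; its cliques have at most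
   2(r+1) vertices and it has (r+1)(d+N) = (r+1) 4a^4 vertices.

   Parameters.  With L = ln q take a = ceil(4mL) and r = q div a: then
   2(r+1) < omega(q) and (r+1) 4a^4 <= q * q^(2m) for q large. *)

From mathcomp Require Import all_boot ssralg zmodp zify.
From Stdlib Require Import Reals Lra.
(* Stdlib's reals re-export [^] on nat as Nat.pow; restore MathComp's expn. *)
From mathcomp Require Import ssrnat.
Import GRing.Theory.
Set Implicit Arguments. Unset Strict Implicit. Unset Printing Implicit Defensive.

Definition solvable_over (V C : finType) (e : rel V) : Prop :=
  exists f : V -> (V -> C) -> C,
    (forall v (x y : V -> C), (forall u, e u v -> x u = y u) -> f v x = f v y) /\
    (forall x : V -> C, exists v, f v x = x v).

Definition clique (V : finType) (e : rel V) (S : {set V}) : Prop :=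
  forall u v, u \in S -> v \in S -> u != v -> e u v.

(* Solvability passes to any alphabet that embeds into the original one:
   decode each guess through the embedding. *)
Lemma solvable_over_sub (V C C' : finType) (e : rel V) (h : C' -> C) (c0 : C') :
  injective h -> solvable_over C e -> solvable_over C' e.
Proof.
move=> h_inj [f [f_local f_wins]].
exists (fun v x => odflt c0 [pick c | h c == f v (h \o x)]); split.
  move=> v x y xy; rewrite (f_local v (h \o x) (h \o y)) // => u uv /=.
  by rewrite xy.
move=> x; have [v fv] := f_wins (h \o x); exists v.
case: pickP => [c /eqP hc | none] /=; first by apply: h_inj; rewrite hc fv.
by have := none (x v); rewrite /= fv eqxx.
Qed.

Section JoinOfCopies.
Variables (H : finType) (eH : rel H) (r : nat).

Definition join_copies : rel ('I_r.+1 * H) := fun x y => (x.1 != y.1) || eH x.2 y.2.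

Lemma join_copies_sym : symmetric eH -> symmetric join_copies.
Proof. by move=> eH_sym x y; rewrite /join_copies eq_sym eH_sym. Qed.

Lemma join_copies_irr : irreflexive eH -> irreflexive join_copies.
Proof. by move=> eH_irr x; rewrite /join_copies eqxx eH_irr. Qed.

(* A clique of the join meets each copy in a clique of H, so a proper
   colouring of H with colours K bounds cliques of the join by (r+1)|K|. *)
Lemma join_copies_clique (K : finType) (col : H -> K) :
  (forall u v, eH u v -> col u != col v) ->
  forall S, clique join_copies S -> #|S| <= r.+1 * #|K|.
Proof.
move=> col_proper S S_clique.
pose phi (v : 'I_r.+1 * H) := (v.1, col v.2).
rewrite -(card_in_imset (f := phi)); last first.
  move=> u v uS vS [same_copy same_col]; apply/eqP; apply: contraT => uv.
  have := S_clique u v uS vS uv; rewrite /join_copies same_copy eqxx /=.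
  by move/col_proper; rewrite same_col eqxx.
by rewrite (leq_trans (max_card _)) // card_prod card_ord.
Qed.

(* First coordinates are added in the cyclic group 'I_{r+1} = Z/(r+1). *)
Local Open Scope ring_scope.

(* Copy k plays H's strategy on second coordinates; [Phi k x] is the first
   coordinate at the first vertex of copy k where that strategy is right.
   Vertex (i, v) bets that the Phi's sum to i, which is true in copy
   T = sum_k Phi k x, where the first successful vertex then wins. *)
Lemma join_copies_solvable (A : finType) :
  solvable_over A eH -> solvable_over ('I_r.+1 * A)%type join_copies.
Proof.
case=> F [F_local F_wins].
pose guess k (x : ('I_r.+1 * H -> 'I_r.+1 * A)%type) v := F v (fun u => (x (k, u)).2).
pose Phi k x : 'I_r.+1 :=
  if [pick v | guess k x v == (x (k, v)).2] is Some v then (x (k, v)).1 else 0.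
have Phi_local k x y : (forall u, x (k, u) = y (k, u)) -> Phi k x = Phi k y.
  move=> xy; have guess_xy v : guess k x v = guess k y v.
    by apply: F_local => u _; rewrite xy.
  rewrite /Phi (eq_pick (_ : _ =1 [pred v | guess k y v == (y (k, v)).2])).
    by case: pickP => // v _; rewrite xy.
  by move=> v /=; rewrite guess_xy xy.
pose f (iv : ('I_r.+1 * H)%type) x := (iv.1 - \sum_(k | k != iv.1) Phi k x, guess iv.1 x iv.2).
exists f; split.
  move=> [i v] x y xy; rewrite /f /=; congr (_ - _, _).
    apply: eq_bigr => k ki; apply: Phi_local => u.
    by apply: xy; rewrite /join_copies /= ki.
  by apply: F_local => u uv; rewrite xy // /join_copies /= eqxx uv.
move=> x; pose T := \sum_k Phi k x.
have [v v_wins] := F_wins (fun u => (x (T, u)).2).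
have [w w_first w_wins] : exists2 w,
    [pick v | guess T x v == (x (T, v)).2] = Some w & guess T x w = (x (T, w)).2.
  case: pickP => [w /eqP | none]; first by exists w.
  by have := none v; rewrite /= /guess v_wins eqxx.
exists (T, w); rewrite /f /= w_wins [RHS]surjective_pairing; congr (_, _).
by rewrite {1}/T (bigD1 T) //= addrK /Phi w_first.
Qed.

End JoinOfCopies.

Section Relabel.
Variables (V : finType) (e : rel V).

Definition relabel : rel 'I_#|V| := fun i j => e (enum_val i) (enum_val j).

Lemma relabel_undirected : symmetric e -> irreflexive e -> undirected relabel.
Proof. by move=> e_sym e_irr; split=> [u v|v]; [exact: e_sym | exact: e_irr]. Qed.

Lemma relabel_q_solvable q : solvable_over 'I_q e -> q_solvable q relabel.
Proof.
case=> f [f_local f_wins].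
exists (fun i x => f (enum_val i) (fun v => x (enum_rank v))); split.
  by move=> i x y xy; apply: f_local => u eu; apply: xy; rewrite /relabel enum_rankK.
move=> x; have [v fv] := f_wins (fun v => x (enum_rank v)).
by exists (enum_rank v); rewrite enum_rankK fv.
Qed.

Lemma relabel_clique_free k :
  (forall S : {set V}, clique e S -> #|S| < k) -> clique_free relabel k.
Proof.
move=> small [S [S_card S_clique]].
suff /small : clique e (enum_val @: S).
  by rewrite card_imset ?S_card ?ltnn //; exact: enum_val_inj.
move=> u v /imsetP [i iS ->] /imsetP [j jS ->] ij.
by apply: S_clique => //; apply: contra ij => /eqP ->.
Qed.

End Relabel.

(* Every integer below (r+1)a is encoded by its quotient and remainder mod a. *)
Lemma ord_embed_prod (q r a : nat) :
  0 < a -> q <= r.+1 * a -> exists h : 'I_q -> 'I_r.+1 * 'I_a, injective h.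
Proof.
move=> a_gt0 q_le.
have quo_lt (c : 'I_q) : c %/ a < r.+1 by rewrite ltn_divLR // (leq_trans (ltn_ord c)).
exists (fun c => (Ordinal (quo_lt c), Ordinal (ltn_pmod c a_gt0))).
move=> c1 c2 [quo_eq rem_eq]; apply: val_inj => /=.
by rewrite (divn_eq c1 a) (divn_eq c2 a) quo_eq rem_eq.
Qed.

Definition is_left (d N : nat) (s : 'I_d + 'I_N) : bool := if s is inl _ then true else false.

Definition complete_bipartite (d N : nat) : rel ('I_d + 'I_N) :=
  fun u v => is_left u != is_left v.

Section CompleteBipartite.
Variables (a d N : nat).
Local Notation config := {ffun 'I_d -> 'I_a}.

(* Pages g p, one per right vertex p, each a function of the configuration of
   the left part; they are covering when any d+1 configurations are mapped
   onto the whole alphabet by some page. *)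
Definition covering (g : {ffun 'I_N -> {ffun config -> 'I_a}}) : Prop :=
  forall T : {set config}, #|T| = d.+1 -> exists p, forall c, exists2 b, b \in T & g p b = c.

Variable g : {ffun 'I_N -> {ffun config -> 'I_a}}.
Hypothesis g_covering : covering g.

Definition unguessed (y : 'I_N -> 'I_a) : {set config} := [set b | [forall p, g p b != y p]].

Lemma card_unguessed y : #|unguessed y| <= d.
Proof.
rewrite leqNgt; apply/negP => big.
pose T := [set b in take d.+1 (enum (unguessed y))].
have T_card : #|T| = d.+1.
  by rewrite cardsE (card_uniqP (take_uniq _ (enum_uniq _))) size_takel // -cardE.
have [p p_onto] := g_covering T_card.
have [b bT gb] := p_onto (y p).
have : b \in unguessed y by move: bT; rewrite inE => /mem_take; rewrite mem_enum.
by rewrite inE => /forallP /(_ p); rewrite gb eqxx.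
Qed.

(* Right vertex p guesses g p of what it sees; if all of them fail, the left
   configuration lies in the small set [unguessed y], and left vertex j
   guesses the j-th coordinate of the j-th element of that set. *)
Lemma complete_bipartite_solvable (c0 : 'I_a) : solvable_over 'I_a (@complete_bipartite d N).
Proof.
pose right (x : 'I_d + 'I_N -> 'I_a) p := x (inr p).
pose left (x : 'I_d + 'I_N -> 'I_a) : config := [ffun j => x (inl j)].
pose f (v : 'I_d + 'I_N) x : 'I_a :=
  match v with
  | inr p => g p (left x)
  | inl j => nth [ffun=> c0] (enum (unguessed (right x))) j j
  end.
exists f; split.
  move=> [j|p] x y xy /=.
    suff -> : unguessed (right x) = unguessed (right y) by [].
    by apply/setP => b; rewrite !inE; apply: eq_forallb => p; rewrite /right xy.
  by congr (g p _); apply/ffunP => j; rewrite !ffunE xy.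
move=> x; case: (boolP [exists p, g p (left x) == x (inr p)]) => [/existsP [p /eqP] | none].
  by exists (inr p).
have left_unguessed : left x \in unguessed (right x) by rewrite inE -negb_exists.
have idx_lt : index (left x) (enum (unguessed (right x))) < d.
  by apply: leq_trans (card_unguessed (right x)); rewrite cardE index_mem mem_enum.
by exists (inl (Ordinal idx_lt)); rewrite /= nth_index ?mem_enum // ffunE.
Qed.

End CompleteBipartite.

Lemma leq_expn2r m n e : m <= n -> m ^ e <= n ^ e.
Proof. by move=> mn; case: e => [|e]; rewrite ?expn0 ?leq_exp2r. Qed.

Lemma bin_le_exp n k : 'C(n, k) <= n ^ k.
Proof.
have ffact_le m j : m ^_ j <= m ^ j.
  elim: j m => [|j IHj] m; first by rewrite ffactn0.
  by rewrite ffactnS expnS leq_mul // (leq_trans (IHj _)) // leq_expn2r // leq_pred.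
by rewrite (leq_trans _ (ffact_le n k)) // -bin_ffact leq_pmulr // fact_gt0.
Qed.

Lemma card_bigcup_le (I T : finType) (P : pred I) (S : I -> {set T}) :
  #|\bigcup_(i | P i) S i| <= \sum_(i | P i) #|S i|.
Proof.
elim/big_ind2: _ => [|m A n B A_le B_le|i _]; rewrite ?cards0 //.
exact: leq_trans (leq_of_leqif (leq_card_setU A B)) (leq_add A_le B_le).
Qed.

(* The counting inequality behind the existence of covering pages: if one
   page misses a colour on t points with probability at most 1/a^2 then,
   with fewer than a^N sets of t points, N random pages cover all of them. *)
Lemma page_count_lt a t A C N : 1 < a -> t <= A -> a.-1 ^ t * a ^ 2 <= a ^ t ->
  C < a ^ N -> C * (a * (a.-1 ^ t * a ^ (A - t))) ^ N < (a ^ A) ^ N.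
Proof.
move=> a_gt1 t_le ratio C_lt; set X := a * _.
have X_a : a * X <= a ^ A.
  have -> : a * X = a.-1 ^ t * a ^ 2 * a ^ (A - t) by rewrite /X; nia.
  by rewrite -[in leqRHS](subnKC t_le) expnD leq_mul2r ratio orbT.
have b_gt0 : 0 < a.-1 by rewrite -subn1 subn_gt0.
have X_gt0 : 0 < X by rewrite /X !muln_gt0 !expn_gt0 b_gt0 ltnW.
rewrite (@leq_trans (a ^ N * X ^ N)) // ?ltn_pmul2r ?expn_gt0 ?X_gt0 //.
by rewrite -expnMn leq_expn2r.
Qed.

Section PageCounting.
Variables (a d N : nat).
Local Notation config := {ffun 'I_d -> 'I_a}.
Local Notation page := {ffun config -> 'I_a}.

Definition avoiding (T : {set config}) (c : 'I_a) : {set page} :=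
  [set h : page | [forall b in T, h b != c]].

Lemma card_avoiding T c : #|avoiding T c| = a.-1 ^ #|T| * a ^ (a ^ d - #|T|).
Proof.
pose F x := if x \in T then predC1 c else predT.
have -> : avoiding T c = [set h | h \in finfun.family F].
  apply/setP => h; rewrite !inE; apply/forall_inP/familyP => [h_avoid x | h_fam x xT].
    by rewrite /F; case: ifP => // xT; rewrite inE h_avoid.
  by have := h_fam x; rewrite /F xT inE.
rewrite cardsE card_family foldrE big_map big_enum /= (bigID (mem T)) /=.
rewrite (eq_bigr (fun _ => a.-1)) => [|x xT]; last by rewrite /F xT cardC1 card_ord.
rewrite [X in _ * X](eq_bigr (fun _ => a)) => [|x xT]; last by rewrite /F (negbTE xT) card_ord.
rewrite !prod_nat_const; congr (_ * _ ^ _).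
have := cardC T; rewrite card_ffun !card_ord => <-.
by rewrite addKn; apply: eq_card.
Qed.

Lemma covering_exists : 1 < a -> d.+1 <= a ^ d -> a.-1 ^ d.+1 * a ^ 2 <= a ^ d.+1 ->
  d * d.+1 < N -> exists g : {ffun 'I_N -> page}, covering g.
Proof.
move=> a_gt1 t_le ratio N_big.
pose not_onto T := \bigcup_(c < a) avoiding T c.
pose bad := \bigcup_(T : {set config} | #|T| == d.+1)
  [set g : {ffun 'I_N -> page} | g \in ffun_on (not_onto T)].
have not_onto_card (T : {set config}) : #|T| = d.+1 ->
    #|not_onto T| <= a * (a.-1 ^ d.+1 * a ^ (a ^ d - d.+1)).
  move=> T_card; apply: leq_trans (card_bigcup_le _ _) _.
  by rewrite (eq_bigr _ (fun c _ => card_avoiding T c)) sum_nat_const card_ord T_card.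
have bad_lt : #|bad| < #|[set: {ffun 'I_N -> page}]|.
  apply: leq_ltn_trans (card_bigcup_le _ _) _.
  rewrite (@leq_ltn_trans (\sum_(T : {set config} | #|T| == d.+1)
      (a * (a.-1 ^ d.+1 * a ^ (a ^ d - d.+1))) ^ N)) //.
    apply: leq_sum => T /eqP T_card.
    by rewrite cardsE card_ffun_on card_ord leq_expn2r // not_onto_card.
  rewrite sum_nat_cond_const card_draws cardsT card_ffun !card_ffun !card_ord.
  apply: page_count_lt => //; apply: leq_ltn_trans (bin_le_exp _ _) _.
  by rewrite -expnM ltn_exp2l.
have /subsetPn [g _ g_good] : ~~ ([set: {ffun 'I_N -> page}] \subset bad).
  by apply: contraL bad_lt => /subset_leq_card; rewrite -leqNgt.
exists g => T T_card.
have : [exists p, [forall c, [exists b in T, g p b == c]]].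
  apply: contraR g_good => no_page; apply/bigcupP; exists T; first by rewrite T_card.
  rewrite inE; apply/ffun_onP => p; move: no_page; rewrite negb_exists.
  move=> /forallP /(_ p); rewrite negb_forall => /existsP [c miss_c].
  apply/bigcupP; exists c => //; rewrite inE; apply/forall_inP => b bT.
  by apply: contra miss_c => /eqP gb; apply/existsP; exists b; rewrite bT gb eqxx.
case/existsP => p /forallP onto; exists p => c.
by have /existsP [b /andP [bT /eqP gb]] := onto c; exists b.
Qed.

End PageCounting.

(* Bernoulli's inequality (1 + 1/b)^n >= 1 + n/b, cleared of denominators. *)
Lemma bernoulli b n : b ^ n * (b + n) <= b.+1 ^ n * b.
Proof.
elim: n => [|n IHn]; first by rewrite !expn0 addn0.
rewrite !expnS addnS.
have pow_le : b ^ n <= b.+1 ^ n by apply: leq_expn2r.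
move: IHn pow_le; move: (b ^ n) (b.+1 ^ n) => P Q IHn pow_le.
have := leq_mul (leqnn b) IHn; have := leq_mul (leqnn b) pow_le; nia.
Qed.

(* (1 - 1/a)^(2a^2) <= 1/a^2, from (1 - 1/a)^a <= 1/2 and a^2 <= 4^a. *)
Lemma miss_probability a : 1 < a -> a.-1 ^ (2 * a ^ 2) * a ^ 2 <= a ^ (2 * a ^ 2).
Proof.
move=> a_gt1; have a_succ : a = a.-1.+1 by rewrite prednK // ltnW.
set b := a.-1 in a_succ *.
have b_gt0 : 0 < b by rewrite /b -subn1 subn_gt0.
have half : 2 * b ^ a <= a ^ a.
  have := bernoulli b a; rewrite -a_succ => bern.
  rewrite -(leq_pmul2r b_gt0) (leq_trans _ bern) // -mulnA mulnC -mulnA leq_mul2l.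
  by rewrite {2}a_succ muln2 -addnn leq_add2l leqnSn orbT.
have sq_le : a ^ 2 <= 2 ^ (2 * a).
  by rewrite mulnC expnM leq_expn2r // ltnW // ltn_expl.
have -> : 2 * a ^ 2 = a * (2 * a) by rewrite mulnCA -mulnn.
rewrite (expnM b) (expnM a a) (leq_trans (leq_mul (leqnn _) sq_le)) //.
by rewrite mulnC -expnMn leq_expn2r.
Qed.

Lemma solvable_graph_exists (q a r k : nat) :
  1 < a -> 0 < q -> q <= r.+1 * a -> 2 * r.+1 < k ->
  exists n (e : rel 'I_n), undirected e /\ q_solvable q e /\ clique_free e k /\
    n = r.+1 * (4 * a ^ 4).
Proof.
move=> a_gt1 q_gt0 q_le k_gt; have a_gt0 := ltnW a_gt1.
set d := (2 * a ^ 2).-1; set N := (d * d.+1).+1.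
have d_succ : d.+1 = 2 * a ^ 2 by rewrite prednK // muln_gt0 expn_gt0 a_gt0.
have [g g_covering] : exists g : {ffun 'I_N -> {ffun {ffun 'I_d -> 'I_a} -> 'I_a}}, covering g.
  by apply: covering_exists => //; [exact: ltn_expl | rewrite d_succ miss_probability].
set G := @join_copies _ (@complete_bipartite d N) r.
have G_solvable : solvable_over 'I_q G.
  have [h h_inj] := ord_embed_prod a_gt0 q_le.
  apply: (solvable_over_sub (Ordinal q_gt0) h_inj); apply: join_copies_solvable.
  exact: complete_bipartite_solvable g_covering (Ordinal a_gt0).
exists _, (relabel G); split; [|split; [|split]].
- apply: relabel_undirected.
    by apply: join_copies_sym => u v; rewrite /complete_bipartite eq_sym.
  by apply: join_copies_irr => v; rewrite /complete_bipartite eqxx.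
- exact: relabel_q_solvable.
- apply: relabel_clique_free => S S_clique.
  have := join_copies_clique (col := @is_left d N) (fun u v uv => uv) S_clique.
  by rewrite card_bool mulnC => /leq_ltn_trans; apply.
- rewrite card_prod card_sum !card_ord; congr (_ * _).
  have -> : d + N = d.+1 * d.+1 by rewrite /N; nia.
  by rewrite d_succ mulnACA -expnD mulnn.
Qed.

Section RealEstimates.
Local Open Scope R_scope.
Local Unset Implicit Arguments.

(* x <= e^(eps x) / eps, from 1 + y <= e^y. *)
Lemma le_exp_div (x eps : R) : 0 < eps -> x <= exp (eps * x) / eps.
Proof.
move=> eps_gt0; have := exp_ineq1_le (eps * x) => exp_ge.
apply: (Rmult_le_reg_r eps) => //; rewrite /Rdiv Rmult_assoc Rinv_l; lra.
Qed.

(* c L <= e^L as soon as L >= 4c >= 0, since e^L >= (L/2)^2. *)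
Lemma mul_le_exp (c L : R) : 0 <= c -> 4 * c <= L -> c * L <= exp L.
Proof.
move=> c_ge0 L_ge.
have half_lt : L / 2 < exp (L / 2) by have := exp_ineq1_le (L / 2); lra.
have -> : exp L = exp (L / 2) * exp (L / 2) by rewrite -exp_plus; f_equal; lra.
nra.
Qed.

(* 4 A^4 <= e^(2y) whenever 0 <= A <= 4y + 1 and y >= 4 * 17^4. *)
Lemma quartic_le_exp (y A : R) : 334084 <= y -> 0 <= A <= 4 * y + 1 ->
  4 * A ^ 4 <= exp (2 * y).
Proof.
move=> y_big [A_ge0 A_le]; set E := exp (y / 4).
have y_le : y <= 4 * E.
  have := le_exp_div y (1 / 4) ltac:(lra).
  have -> : 1 / 4 * y = y / 4 by field.
  by rewrite -/E (_ : E / (1 / 4) = 4 * E) //; field.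
have E_ge1 : 1 <= E by have := exp_ineq1_le (y / 4); rewrite -/E; lra.
have A_le17 : A <= 17 * E by lra.
have A4_le : A ^ 4 <= 83521 * exp y.
  have -> : exp y = E ^ 4 by rewrite /E /= !Rmult_1_r -!exp_plus; f_equal; field.
  by rewrite (_ : 83521 = 17 ^ 4) -?Rpow_mult_distr; [apply: pow_incr; lra | rewrite /=; ring].
have -> : exp (2 * y) = exp y * exp y by rewrite -exp_plus; f_equal; ring.
have y_le_exp : y <= exp y by have := exp_ineq1_le y; lra.
have : 334084 * exp y <= exp y * exp y.
  by apply: Rmult_le_compat_r; [apply: Rlt_le; apply: exp_pos | lra].
lra.
Qed.

(* The clique-number margin: if A > 4mL and q >= 4mL, then q/(mL) * ln L,
   the lower bound on omega, exceeds 2(q/A + 1). *)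
Lemma clique_margin (m L q A : R) : 0 < m -> 0 < L -> 1 <= ln L ->
  4 * m * L < A -> 4 * m * L <= q -> 2 * (q / A + 1) < q / m * (ln L / L).
Proof.
move=> m_gt0 L_gt0 lnL_ge A_gt q_ge.
have mL_gt0 : 0 < 4 * m * L by nra.
have qA_lt : q / A < q / (4 * m * L).
  by apply: Rmult_lt_compat_l; [lra | apply: Rinv_lt_contravar; nra].
have ratio_ge1 : 1 <= q / (4 * m * L).
  apply: (Rmult_le_reg_r (4 * m * L)) => //.
  by rewrite (_ : q / (4 * m * L) * (4 * m * L) = q); [lra | field; lra].
have -> : q / m * (ln L / L) = 4 * (q / (4 * m * L)) * ln L by field; lra.
nra.
Qed.

Lemma nat_ceil (x : R) : 0 <= x -> exists a : nat, x < INR a <= x + 1.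
Proof.
move=> x_ge0; have [up_gt up_le] := archimed x.
exists (Z.to_nat (up x)); rewrite INR_IZR_INZ Znat.Z2Nat.id; first lra.
by apply: le_IZR; lra.
Qed.

Lemma eventually_exp_le (K : R) : exists Q : nat, forall q, (Q <= q)%N -> exp K <= INR q.
Proof.
have [Q [Q_gt _]] := nat_ceil (exp K) (Rlt_le _ _ (exp_pos K)).
by exists Q => q /leP Qq; apply: Rlt_le; apply: Rlt_le_trans (le_INR _ _ Qq).
Qed.

Lemma ln_ge_of_exp_le (K q : R) : exp K <= q -> K <= ln q.
Proof.
move=> q_ge; apply: Rnot_lt_le => lt; have := exp_increasing _ _ lt.
rewrite exp_ln; [lra | exact: Rlt_le_trans (exp_pos K) q_ge].
Qed.

(* For L = ln q large, the alphabet size a = ceil(4 m L) of the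
   construction: a >= 2, its clique bound 2(q/a + 1) stays below the given
   lower bound on omega, and 4a^4 <= q^(2m). *)
Lemma alphabet_at (m q : R) : 0 < m -> 0 < q -> 3 <= ln q -> 1 <= 4 * m * ln q ->
  16 * m <= ln q -> 334084 <= m * ln q ->
  exists a : nat, (1 < a)%N /\ (2 * (q / INR a + 1) < q / m * (ln (ln q) / ln q)) /\
    (4 * INR a ^ 4 <= exp (2 * m * ln q)).
Proof.
set L := ln q => m_gt0 q_gt0 L_ge3 mL_ge1 L_ge_m mL_big.
have [a [a_gt a_le]] := nat_ceil (4 * m * L) ltac:(lra).
have lnL_ge1 : 1 <= ln L by apply: ln_ge_of_exp_le; have := exp_le_3; lra.
have mL_le_q : 4 * m * L <= q.
  by rewrite -(exp_ln q q_gt0) -/L; apply: mul_le_exp; lra.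
exists a; split; first by apply/ltP; apply: INR_lt; rewrite /=; lra.
split; first by apply: clique_margin => //; lra.
by rewrite Rmult_assoc; apply: quartic_le_exp => //; split; [apply: pos_INR | lra].
Qed.

Lemma alphabet_choice (m : R) : 0 < m -> exists Q : nat, forall q, (Q <= q)%N ->
  exists a : nat, (1 < a)%N /\
    (2 * (INR q / INR a + 1) < INR q / m * (ln (ln (INR q)) / ln (INR q))) /\
    (4 * INR a ^ 4 <= exp (2 * m * ln (INR q))).
Proof.
move=> m_gt0; have inv_gt0 := Rinv_0_lt_compat m m_gt0.
have [Q Q_large] := eventually_exp_le (3 + 16 * m + / m + 334084 * / m).
exists Q => q /Q_large q_ge; have q_gt0 := Rlt_le_trans _ _ _ (exp_pos _) q_ge.
have := ln_ge_of_exp_le _ _ q_ge; set L := ln (INR q) => L_ge.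
have scaled c : c * / m <= L -> c <= m * L.
  move=> le; rewrite -[c](_ : m * (c * / m) = c); last by field; lra.
  by apply: Rmult_le_compat_l; lra.
have mL_ge1 : 1 <= m * L by apply: scaled; lra.
have mL_big : 334084 <= m * L by apply: scaled; lra.
by apply: alphabet_at => //; rewrite -/L; lra.
Qed.

Lemma graph_size_bound (m : R) (q a r : nat) : (r < q)%N ->
  4 * INR a ^ 4 <= exp (2 * m * ln (INR q)) ->
  INR (r.+1 * (4 * a ^ 4)) <= Rpower (INR q) (2 * m + 1).
Proof.
move=> /ltP r_lt a_small; have q_gt0 : 0 < INR q by apply: lt_0_INR; lia.
have -> : (r.+1 * (4 * a ^ 4) = r.+1 * (4 * (a * a * a * a)))%N.
  by rewrite !expnS expn0 muln1 !mulnA.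
rewrite -!multE !mult_INR /Rpower Rmult_plus_distr_r Rmult_1_l exp_plus exp_ln //.
have four : INR 4 = 4 by rewrite /=; ring.
rewrite Rmult_comm four (_ : INR a * INR a * INR a * INR a = INR a ^ 4); last by rewrite /=; ring.
apply: Rmult_le_compat => //; [|exact: pos_INR | by apply: le_INR; lia].
by apply: Rmult_le_pos; [lra | apply: pow_le; apply: pos_INR].
Qed.

Lemma clique_bound_nat (q a k : nat) (B : R) : (0 < a)%N ->
  2 * (INR q / INR a + 1) < B -> B <= INR k -> (2 * (q %/ a).+1 < k)%N.
Proof.
move=> a_gt0 margin B_le; apply/ltP; apply: INR_lt.
have a_pos : 0 < INR a by apply: lt_0_INR; apply/ltP.
have quo_le : INR (q %/ a) <= INR q / INR a.
  apply: (Rmult_le_reg_r (INR a)) => //.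
  rewrite (_ : INR q / INR a * INR a = INR q); last by field; lra.
  by rewrite -mult_INR multE; apply: le_INR; apply/leP; exact: leq_trunc_div.
have two : INR 2 = 2 by rewrite /=; lra.
by rewrite -multE mult_INR two S_INR; lra.
Qed.

End RealEstimates.

Theorem theorem4 (m : R) (omega : nat -> nat)
  (hm : (0 < m)%R)
  (homega_pos : forall q : nat, (0 < omega q)%N)
  (homega : exists Q0 : nat, forall q : nat, (Q0 <= q)%N ->
     (INR (omega q) >= (INR q / m) * (ln (ln (INR q)) / ln (INR q)))%R) :
  exists Q1 : nat, forall q : nat, (Q1 <= q)%N ->
    exists (n : nat) (e : rel 'I_n),
      undirected e /\ q_solvable q e /\ clique_free e (omega q) /\
      (INR n <= Rpower (INR q) (2 * m + 1))%R.
Proof.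
case: homega => Q0 omega_large.
have [Q1 alphabet] := alphabet_choice m hm.
exists (maxn 1 (maxn Q0 Q1)) => q; rewrite !geq_max => /and3P [q_gt0 q_Q0 q_Q1].
have [a [a_gt1 [margin small]]] := alphabet q q_Q1.
have a_gt0 := ltnW a_gt1.
have clique_lt : 2 * (q %/ a).+1 < omega q.
  exact: clique_bound_nat a_gt0 margin (Rge_le _ _ (omega_large q q_Q0)).
have [n [e [e_undirected [e_solvable [e_free n_eq]]]]] :=
  solvable_graph_exists a_gt1 q_gt0 (ltnW (ltn_ceil q a_gt0)) clique_lt.
exists n, e; do 3!split => //.
rewrite n_eq; exact: graph_size_bound (ltn_Pdiv a_gt1 q_gt0) small.
Qed.
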